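(* Let $q$ be a power of $2$ and $n\ge1$ an integer with $\gcd(n+1,q)=1$. If $q>n/2$, then there exists $a\in\mathbb{F}_q$ such that $C_n(a)$ is LCD.
   Context: For $a\in\mathbb{F}_q$ and $n \ge 1$, $T_n(a)$ denotes the $n\times n$ symmetric tridiagonal Toeplitz matrix over $\mathbb{F}_q$ with all diagonal entries equal to $a$, all entries on the first super- and sub-diagonals equal to $1$, and all other entries $0$. $C_n(a)$ is the $[2n,n]$ linear code over $\mathbb{F}_q$ with generator matrix $[I_n \mid T_n(a)]$. A linear code $C$ is LCD if $C\cap C^\perp=\{0\}$ (Euclidean dual). *)

From mathcomp Require Import all_boot all_order all_algebra all_field.
Set Implicit Arguments. Unset Strict Implicit. Unset Printing Implicit Defensive.
Import GRing.Theory.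
Local Open Scope ring_scope.

Definition tridiag (F : fieldType) (n : nat) (a : F) : 'M[F]_n :=
  \matrix_(i < n, j < n)
    if i == j then a
    else if ((i.+1 == j :> nat) || (j.+1 == i :> nat))%N then 1 else 0.

(* Generator matrix [I_n | T_n(a)] of the [2n, n] code C_n(a). *)
Definition genC (F : fieldType) (n : nat) (a : F) : 'M[F]_(n, n + n) :=
  row_mx 1%:M (tridiag n a).

Definition in_code (F : fieldType) (k m : nat) (G : 'M[F]_(k, m)) (x : 'rV[F]_m) : Prop :=
  (x <= G)%MS.

Definition in_dual (F : fieldType) (k m : nat) (G : 'M[F]_(k, m)) (x : 'rV[F]_m) : Prop :=
  forall c : 'rV[F]_m, in_code G c -> x *m c^T = 0.

Definition is_LCD (F : fieldType) (k m : nat) (G : 'M[F]_(k, m)) : Prop :=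
  forall x : 'rV[F]_m, in_code G x -> in_dual G x -> x = 0.

From mathcomp Require Import all_boot all_order all_algebra all_field.
From mathcomp Require Import ring zify.
Set Implicit Arguments. Unset Strict Implicit. Unset Printing Implicit Defensive.
Import GRing.Theory.
Local Open Scope ring_scope.

(* Let G = [I | T] with T = T_n(a).  Since T is symmetric,
   G G^T = I + T^2, which in characteristic 2 equals (I + T)^2 = T_n(a+1)^2.
   A code whose Gram matrix G G^T is nonsingular is LCD (Massey's criterion,
   in the direction needed here), so it suffices to make T_n(b) nonsingular
   for b = a + 1.  A vector in the left kernel of T_n(b) is, once padded with
   zeros at both ends, a solution of the three-term recurrence
   s(k+2) = -b s(k+1) - s(k) vanishing at 0 and n+1; hence it is zero as soon
   as U(n+1)(-b) != 0, where U is the polynomial sequence 0, 1, X, X^2 - 1, ...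
   with U(k+2) = X U(k+1) - U(k) (Chebyshev polynomials of the second kind).
   When gcd(n+1, q) = 1 with q even, n = 2m is even, and the doubling formula
   gives U(2m+1) = (U(m+1) - U(m)) (U(m+1) + U(m)) = (U(m+1) + U(m))^2 in
   characteristic 2.  The polynomial U(m+1) + U(m) has degree m < q, so it has
   a non-root c in F_q, and a := -c - 1 (so that -(a+1) = c) works. *)

Section ChebyshevSequence.
Variable F : fieldType.

(* cheb k is U_{k-1}(X/2): the sequence 0, 1, X, X^2 - 1, ... *)
Fixpoint cheb (k : nat) : {poly F} :=
  match k with
  | 0 => 0
  | 1 => 1
  | (k'.+1 as k1).+1 => cheb k1 * 'X - cheb k'
  end.

Lemma chebSS k : cheb k.+2 = cheb k.+1 * 'X - cheb k.
Proof. by []. Qed.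

Lemma size_cheb k : size (cheb k) = k.
Proof.
suff [] : size (cheb k) = k /\ size (cheb k.+1) = k.+1 by [].
elim: k => [|k [IH1 IH2]]; first by rewrite size_poly0 size_poly1.
split=> //; have sX : size (cheb k.+1 * 'X) = k.+2.
  by rewrite size_mulX ?IH2 // -size_poly_eq0 IH2.
by rewrite chebSS size_polyDl sX // size_polyN IH1.
Qed.

Definition chebE (c : F) (k : nat) : F := (cheb k).[c].

Lemma chebE0 c : chebE c 0 = 0. Proof. by rewrite /chebE horner0. Qed.
Lemma chebE1 c : chebE c 1 = 1. Proof. by rewrite /chebE hornerC. Qed.
Lemma chebESS c k : chebE c k.+2 = chebE c k.+1 * c - chebE c k.
Proof. by rewrite /chebE chebSS hornerD hornerN hornerMX. Qed.

Lemma recurrence_chebE (c : F) (N : nat) (s : nat -> F) :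
  s 0%N = 0 -> (forall k, (k < N)%N -> s k.+2 = c * s k.+1 - s k) ->
  forall k, (k <= N.+1)%N -> s k = s 1%N * chebE c k.
Proof.
move=> s0 rec.
have pair k : (k <= N)%N ->
    s k = s 1%N * chebE c k /\ s k.+1 = s 1%N * chebE c k.+1.
  elim: k => [|k IH] hk; first by rewrite chebE0 chebE1 s0 mulr0 mulr1.
  have [IH1 IH2] := IH (ltnW hk); split=> //.
  by rewrite rec // chebESS IH1 IH2; ring.
by case=> [|k] hk; [rewrite chebE0 s0 mulr0 | case: (pair k hk)].
Qed.

Lemma chebE_add c m n :
  chebE c (m + n).+1 = chebE c m.+1 * chebE c n.+1 - chebE c m * chebE c n.
Proof.
elim: n m => [|n IH] m; first by rewrite addn0 chebE1 chebE0; ring.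
by rewrite addnS -addSn IH !chebESS; ring.
Qed.

Lemma chebE_double c m :
  chebE c (m + m).+1 = (chebE c m.+1 - chebE c m) * (chebE c m.+1 + chebE c m).
Proof. by rewrite chebE_add; ring. Qed.

End ChebyshevSequence.

Section TridiagonalKernel.
Variable F : fieldType.

(* For v : 'rV_n, the sequence 0, v_0, ..., v_{n-1}, 0, 0, ... *)
Definition vpad n (v : 'rV[F]_n) (k : nat) : F :=
  if k is k'.+1 then oapp (fun i : 'I_n => v 0 i) 0 (insub k') else 0.

Lemma vpad_ord n (v : 'rV[F]_n) (i : 'I_n) : vpad v i.+1 = v 0 i.
Proof. by rewrite /= valK. Qed.

Lemma vpad_out n (v : 'rV[F]_n) k : (n < k)%N -> vpad v k = 0.
Proof. by case: k => //= k lt; rewrite insubN // -leqNgt. Qed.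

Lemma sum_vpad n (v : 'rV[F]_n) k :
  \sum_(i < n) v 0 i * (i.+1 == k :> nat)%:R = vpad v k.
Proof.
case: k => [|k]; first by rewrite big1 // => i _; rewrite mulr0.
case: (ltnP k n) => [lt|ge]; last first.
  rewrite vpad_out // big1 // => i _; rewrite eqSS.
  by rewrite ltn_eqF ?mulr0 // (leq_trans (ltn_ord i) ge).
rewrite (bigD1 (Ordinal lt)) //= eqxx mulr1 big1 ?addr0 => [|i].
  by rewrite -(vpad_ord v (Ordinal lt)).
by rewrite eqSS -val_eqE /= => /negbTE->; rewrite mulr0.
Qed.

Lemma tridiag_entry n (b : F) (i j : 'I_n) : tridiag n b i j =
  b * (i.+1 == j.+1 :> nat)%:R + (i.+1 == j :> nat)%:R + (i.+1 == j.+2 :> nat)%:R.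
Proof.
rewrite mxE -val_eqE !eqSS; case: ltngtP => [lt|gt|<-].
- have le_ij : (i < j.+1)%N by rewrite ltnS ltnW.
  rewrite (gtn_eqF le_ij) (ltn_eqF le_ij) orbF mulr0 add0r addr0.
  by case: (_ == _).
- have le_ji : (j < i.+1)%N by rewrite ltnS ltnW.
  rewrite (gtn_eqF le_ji) mulr0 !add0r eq_sym.
  by case: (_ == _).
- by rewrite (gtn_eqF (ltnSn i)) (ltn_eqF (ltnSn i)) mulr1 !addr0.
Qed.

Lemma mul_tridiag_entry n (b : F) (v : 'rV[F]_n) (j : 'I_n) :
  (v *m tridiag n b) 0 j = vpad v j + b * vpad v j.+1 + vpad v j.+2.
Proof.
rewrite mxE; under eq_bigr => i _ do rewrite tridiag_entry !mulrDr mulrCA.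
rewrite !big_split -mulr_sumr !sum_vpad.
by congr (_ + _); apply: addrC.
Qed.

Lemma tridiag_rker n (b : F) (v : 'rV[F]_n) :
  v *m tridiag n b = 0 -> chebE (- b) n.+1 != 0 -> v = 0.
Proof.
move=> vT0 Unz.
have step k : (k < n)%N -> vpad v k.+2 = - b * vpad v k.+1 - vpad v k.
  move=> lt; have := mul_tridiag_entry b v (Ordinal lt).
  rewrite vT0 mxE /= => /esym/eqP; rewrite addrC addr_eq0 => /eqP->; ring.
have shape := recurrence_chebE (s := vpad v) (erefl _) step.
have v1 : vpad v 1%N = 0.
  apply/eqP; move: (shape n.+1 (leqnn _)); rewrite vpad_out //.
  by move/esym/eqP; rewrite mulf_eq0 (negbTE Unz) orbF.
apply/rowP => i; rewrite mxE -vpad_ord shape ?v1 ?mul0r //; exact: leqW.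
Qed.

End TridiagonalKernel.

Lemma is_LCD_gram (F : fieldType) k m (G : 'M[F]_(k, m)) :
  (forall y : 'rV_k, y *m (G *m G^T) = 0 -> y = 0) -> is_LCD G.
Proof.
move=> gram_inj x /submxP [y ->] x_dual.
suff -> : y = 0 by rewrite mul0mx.
apply: gram_inj; apply/rowP => j; rewrite mulmxA !mxE.
have := x_dual (row j G) (row_sub j G) => /(congr1 (fun M : 'M_1 => M 0 0)).
rewrite !mxE => dual_j; rewrite -[RHS]dual_j.
by apply: eq_bigr => l _; rewrite !mxE.
Qed.

Lemma tridiag_tr (F : fieldType) n (a : F) : (tridiag n a)^T = tridiag n a.
Proof. by apply/matrixP => i j; rewrite !mxE eq_sym orbC. Qed.

Lemma tridiag_shift (F : fieldType) n (a b : F) :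
  tridiag n (a + b) = b%:M + tridiag n a.
Proof.
apply/matrixP => i j; rewrite !mxE.
by case: (i == j); rewrite /= ?add0r // addrC.
Qed.

Lemma gram_genC_pchar2 (F : fieldType) n (a : F) : 2%N \in [pchar F] ->
  genC n a *m (genC n a)^T = tridiag n (a + 1) *m tridiag n (a + 1).
Proof.
move=> F2; set T := tridiag n a.
have TT0 : T + T = 0 by apply/matrixP => i j; rewrite !mxE addrr_pchar2.
rewrite /genC tr_row_mx mul_row_col trmx1 mul1mx tridiag_tr -/T tridiag_shift -/T.
by rewrite mulmxDl !mulmxDr !mul1mx mulmx1 addrA -(addrA _ T T) TT0 addr0.
Qed.

Lemma is_LCD_genC_pchar2 (F : fieldType) n (a : F) : 2%N \in [pchar F] ->
  chebE (- (a + 1)) n.+1 != 0 -> is_LCD (genC n a).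
Proof.
move=> F2 Unz; apply: is_LCD_gram => y.
rewrite gram_genC_pchar2 // mulmxA => /tridiag_rker /(_ Unz).
by move=> /tridiag_rker /(_ Unz).
Qed.

Lemma exists_nonroot (F : finFieldType) (p : {poly F}) :
  p != 0 -> (size p <= #|F|)%N -> exists c, ~~ root p c.
Proof.
move=> p_nz small; apply/existsP; rewrite -negb_forall; apply/negP => /forallP roots.
have := max_poly_roots p_nz _ (enum_uniq F); rewrite -cardE ltnNge small.
by move/(_ (introT allP (fun c _ => roots c))).
Qed.

Theorem corollary2p1 (F : finFieldType) (q n : nat) :
  (exists k : nat, q = (2 ^ k)%N) ->
  #|F| = q ->
  (1 <= n)%N ->
  coprime n.+1 q ->
  (n < 2 * q)%N ->
  exists a : F, is_LCD (genC n a).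
Proof.
move=> [k q2k] cardF _ cop_nq n_lt.
have F2 : 2%N \in [pchar F] by apply: (@card_finPcharP F 2 k); rewrite ?cardF.
have k_gt0 : (0 < k)%N.
  by case: k q2k => // q1; have := finNzRing_gt1 F; rewrite cardF q1.
have n_even : ~~ odd n.
  by move: cop_nq; rewrite q2k coprime_pexpr // coprimen2.
set m := n./2; have n_mm : n = (m + m)%N.
  by rewrite addnn -[LHS](odd_double_half n) (negbTE n_even).
pose P : {poly F} := cheb F m.+1 + cheb F m.
have size_P : size P = m.+1 by rewrite size_polyDl !size_cheb.
have [c P_c] : exists c, ~~ root P c.
  by apply: exists_nonroot; rewrite -?size_poly_eq0 size_P // cardF; lia.
exists (- c - 1); apply: is_LCD_genC_pchar2 => //.
have Pc_nz : chebE c m.+1 + chebE c m != 0 by move: P_c; rewrite /root hornerD.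
rewrite subrK opprK n_mm chebE_double (oppr_pchar2 F2).
exact: mulf_neq0.
Qed.
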